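(* Let $I\subseteq\{1,\dots,m\}$, $A\subseteq F_I(\Gamma^m)$ a basic Presburger set, and $J,H$ subsets of $\{1,\dots,m\}$ such that $F_J(A)$ and $F_H(A)$ are non-empty. Then: (1) $F_J(A)=\pi_J(A)$. (2) If $H\subseteq J$ then $F_H(A)=F_H(F_J(A))$. (3) $F_H(A)\subseteq\overline{F_J(A)}$ if and only if $H\subseteq J$. In particular the faces of $A$ are linearly ordered by specialisation if and only if their supports are linearly ordered by inclusion. (4) $F_{H\cap J}(A)$ is non-empty.
   Context: $\mathcal{Z}$ is a $\mathbb{Z}$-group (linearly ordered abelian group with smallest positive element $1$, $|\mathcal{Z}/n\mathcal{Z}|=n$ for all $n\geq1$), $\mathcal{Q}$ its divisible hull, $\Gamma=\mathcal{Z}\cup\{+\infty\}$, $\Omega=\mathcal{Q}\cup\{+\infty\}$. Topology on $\Omega$ generated by open intervals and $]a,+\infty]$ ($a\in\mathcal{Q}$); product topology on $\Omega^m$; $\overline A$ is closure in $\Omega^m$. $\mathrm{Supp}\,a=\{i:a_i\neq+\infty\}$, $F_I(\Gamma^m)=\{a\in\Gamma^m:\mathrm{Supp}\,a=I\}$, $F_J(A)=\{a\in\overline A:\mathrm{Supp}\,a=J\}$; when non-empty it is called a face of $A$. $\pi_J:\Gamma^m\to F_J(\Gamma^m)$ replaces every coordinate of index outside $J$ by $+\infty$. Specialisation order: $B\leq A$ iff $B\subseteq\overline A$. A basic Presburger set $A\subseteq F_I(\Gamma^m)$ is the set of $x\in F_I(\Gamma^m)$ satisfying finitely many conditions $\varphi_l(x)\geq\gamma_l$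 and $\psi_l(x)\equiv\rho_l\,[n_l]$, where $\varphi_l,\psi_l:x\mapsto\sum_{i\in I}c_ix_i$ with $c_i\in\mathbb{Z}$, $\gamma_l\in\mathcal{Z}$, $0\le\rho_l<n_l$ integers, and $a\equiv b\,[n]$ means $a-b\in n\mathcal{Z}$. *)

From HB Require Import structures.
From mathcomp Require Import all_boot all_order all_algebra.
Set Implicit Arguments. Unset Strict Implicit. Unset Printing Implicit Defensive.
Import GRing.Theory.
Local Open Scope ring_scope.

Definition is_ordered_zmod (G : zmodType) (le : rel G) : Prop :=
  [/\ forall x, le x x,
      forall x y, le x y -> le y x -> x = y,
      forall x y z, le x y -> le y z -> le x z,
      forall x y, le x y \/ le y x &
      forall x y z, le x y -> le (x + z) (y + z)].

Definition ltR (G : zmodType) (le : rel G) (x y : G) : Prop := le x y /\ x <> y.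

Definition congr (G : zmodType) (n : nat) (a b : G) : Prop :=
  exists y : G, a - b = y *+ n.

(* (Z, le) is a Z-group whose smallest positive element is [one], and
   |Z / nZ| = n for all n >= 1 (there are n classes mod nZ, listed by f). *)
Definition is_zgroup (Z : zmodType) (le : rel Z) (one : Z) : Prop :=
  [/\ is_ordered_zmod le,
      ltR le 0 one,
      forall x, ltR le 0 x -> le one x &
      forall n : nat, (0 < n)%N ->
        exists f : 'I_n -> Z,
          (forall x, exists i, congr n x (f i)) /\
          (forall i j, congr n (f i) (f j) -> i = j)].

Definition is_divisible_hull (Z Q : zmodType) (le : rel Z) (qle : rel Q)
    (e : Z -> Q) : Prop :=
  [/\ is_ordered_zmod qle,
      forall x y, e (x - y) = e x - e y,
      forall x y, le x y <-> qle (e x) (e y),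
      forall (q : Q) (n : nat), (0 < n)%N -> exists r, r *+ n = q &
      forall q : Q, exists n : nat, (0 < n)%N /\ exists z, q *+ n = e z].

(* Gamma = option Z, Omega = option Q, with None = +oo; points of Gamma^m /
   Omega^m are functions 'I_m -> option _ ; sets are predicates. *)

Definition supp (T : eqType) (m : nat) (x : 'I_m -> option T) : {set 'I_m} :=
  [set i | x i != None].

(* basic open sets of Omega: ival a (Some b) = ]a,b[ , ival a None = ]a,+oo] *)
Definition ival (Q : zmodType) (qle : rel Q) (a : Q) (b : option Q)
    (x : option Q) : Prop :=
  match b with
  | Some b => exists q, x = Some q /\ ltR qle a q /\ ltR qle q b
  | None => match x with None => True | Some q => ltR qle a q end
  end.

(* closure in Omega^m for the product topology (tested on the basis of
   products of basic open sets) *)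
Definition closure (Q : zmodType) (qle : rel Q) (m : nat)
    (S : ('I_m -> option Q) -> Prop) (x : 'I_m -> option Q) : Prop :=
  forall (a : 'I_m -> Q) (b : 'I_m -> option Q),
    (forall i, ival qle (a i) (b i) (x i)) ->
    exists y, S y /\ forall i, ival qle (a i) (b i) (y i).

Definition face (Q : zmodType) (qle : rel Q) (m : nat) (J : {set 'I_m})
    (S : ('I_m -> option Q) -> Prop) (x : 'I_m -> option Q) : Prop :=
  closure qle S x /\ supp x = J.

Definition embpt (Z Q : Type) (e : Z -> Q) (m : nat) (x : 'I_m -> option Z) :
  'I_m -> option Q := fun i => omap e (x i).

Definition embset (Z Q : Type) (e : Z -> Q) (m : nat)
    (A : ('I_m -> option Z) -> Prop) : ('I_m -> option Q) -> Prop :=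
  fun y => exists2 x, A x & forall i, y i = embpt e x i.

Definition projJ (T : Type) (m : nat) (J : {set 'I_m}) (x : 'I_m -> option T) :
  'I_m -> option T := fun i => if i \in J then x i else None.

Definition spec (Q : zmodType) (qle : rel Q) (m : nat)
    (B A : ('I_m -> option Q) -> Prop) : Prop :=
  forall x, B x -> closure qle A x.

Definition linf (Z : zmodType) (m : nat) (I : {set 'I_m}) (c : 'I_m -> int)
    (x : 'I_m -> option Z) : Z :=
  \sum_(i in I) (odflt 0 (x i)) *~ c i.

Definition basic_presburger (Z : zmodType) (le : rel Z) (one : Z) (m : nat)
    (I : {set 'I_m}) (A : ('I_m -> option Z) -> Prop) : Prop :=
  exists (k l : nat) (c : 'I_k -> 'I_m -> int) (g : 'I_k -> Z)
         (d : 'I_l -> 'I_m -> int) (rho n : 'I_l -> nat),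
    (forall j, (rho j < n j)%N) /\
    forall x, A x <->
      [/\ supp x = I,
          (forall j, le (g j) (linf I (c j) x)) &
          (forall j, congr (n j) (linf I (d j) x) (one *+ rho j))].

(* A point of F_J(A) is a limit of points of A whose J-coordinates, living in
   the discrete group Z inside its divisible hull, are eventually constant while
   the other coordinates tend to +oo: a nonempty face provides points of A that
   are fixed on J and arbitrarily large on I \ J.  The linear system asking for
   a rational recession direction of the inequalities of A, zero on J and >= 1
   on I \ J, is then feasible, for by Fourier-Motzkin elimination an
   infeasibility certificate would be a nonnegative combination of the
   inequalities that those points violate.  Clearing denominators and
   multiplying by a common multiple of the moduli gives an integer direction
   along which every point of A can be pushed without leaving A, so pi_J(a) is
   in F_J(A) for every a in A; this is (1).  The rest is formal: a coordinate
   outside J stays +oo in the closure of F_J(A), and pushing along the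
   directions for J and for H gives one for H :&: J. *)

From HB Require Import structures.
From mathcomp Require Import all_boot all_order all_algebra.
From mathcomp Require Import ring.
Set Implicit Arguments. Unset Strict Implicit. Unset Printing Implicit Defensive.
Import Order.TTheory GRing.Theory Num.Theory.
Local Open Scope ring_scope.

Section OrderedZmod.
Variables (G : zmodType) (le : rel G).
Hypothesis hle : is_ordered_zmod le.

Lemma oz_refl x : le x x. Proof. by case: hle => + _ _ _ _; apply. Qed.
Lemma oz_anti x y : le x y -> le y x -> x = y. Proof. by case: hle => _ + _ _ _; apply. Qed.
Lemma oz_trans x y z : le x y -> le y z -> le x z. Proof. by case: hle => _ _ + _ _; apply. Qed.
Lemma oz_total x y : le x y \/ le y x. Proof. by case: hle => _ _ _ + _; apply. Qed.
Lemma oz_addr x y z : le x y -> le (x + z) (y + z).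
Proof. by case: hle => _ _ _ _; apply. Qed.

Lemma oz_addl x y z : le x y -> le (z + x) (z + y).
Proof. by rewrite ![z + _]addrC; apply: oz_addr. Qed.

Lemma oz_add a b c d : le a b -> le c d -> le (a + c) (b + d).
Proof. by move=> h1 h2; apply: oz_trans (oz_addr c h1) (oz_addl b h2). Qed.

Lemma oz_subr_ge0 x y : le x y <-> le 0 (y - x).
Proof.
split=> h; first by move: (oz_addr (- x) h); rewrite subrr.
by move: (oz_addr x h); rewrite add0r subrK.
Qed.

Lemma oz_muln a b n : le a b -> le (a *+ n) (b *+ n).
Proof.
move=> h; elim: n => [|n IH]; first by rewrite !mulr0n oz_refl.
by rewrite !mulrS; apply: oz_add.
Qed.

Lemma oz_muln_ge0 a n : le 0 a -> le 0 (a *+ n).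
Proof. by move=> /(oz_muln n); rewrite mul0rn. Qed.

Lemma oz_le_muln a n : le 0 a -> (0 < n)%N -> le a (a *+ n).
Proof.
by case: n => // n h _; rewrite mulrS -{1}[a]addr0; apply/oz_addl/oz_muln_ge0.
Qed.

Lemma oz_mulz_ge0 a (k : int) : le 0 a -> 0 <= k -> le 0 (a *~ k).
Proof. by case: k => // n h _; apply: oz_muln_ge0. Qed.

Lemma oz_le_mulz a (k : int) : le 0 a -> 0 < k -> le a (a *~ k).
Proof. by case: k => // n h hn; apply: oz_le_muln. Qed.

Lemma oz_lt_le_trans x y z : ltR le x y -> le y z -> ltR le x z.
Proof.
move=> [h1 h2] h3; split; first exact: oz_trans h3.
by move=> exz; apply: h2; apply: oz_anti => //; rewrite exz.
Qed.

Lemma oz_le_lt_trans x y z : le x y -> ltR le y z -> ltR le x z.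
Proof.
move=> h1 [h2 h3]; split; first exact: oz_trans h2.
by move=> exz; apply: h3; apply: oz_anti => //; rewrite -exz.
Qed.

Lemma oz_lt_trans x y z : ltR le x y -> ltR le y z -> ltR le x z.
Proof. by move=> h1 [h2 _]; apply: oz_lt_le_trans h1 h2. Qed.

Lemma oz_lt_irr x : ~ ltR le x x. Proof. by case. Qed.

Lemma oz_lt_addr x y z : ltR le x y -> ltR le (x + z) (y + z).
Proof. by move=> [h1 h2]; split; [apply: oz_addr | move=> /addIr]. Qed.

Lemma oz_lt_addl x y z : ltR le x y -> ltR le (z + x) (z + y).
Proof. by rewrite ![z + _]addrC; apply: oz_lt_addr. Qed.

Lemma oz_ltBl x r : ltR le 0 r -> ltR le (x - r) x.
Proof.
move=> [h1 h2]; rewrite -{2}[x]subr0; apply: oz_lt_addl; split.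
  by apply/oz_subr_ge0; rewrite oppr0 opprK add0r.
by move/oppr_inj=> r0; apply: h2.
Qed.

Lemma oz_ltDl x r : ltR le 0 r -> ltR le x (x + r).
Proof. by move=> h; have := oz_lt_addl x h; rewrite addr0. Qed.

Lemma oz_ub (I : eqType) (f : I -> G) (s : seq I) :
  exists T, le 0 T /\ forall i, i \in s -> le (f i) T.
Proof.
elim: s => [|i s [T [h0 hT]]]; first by exists 0; split => //; apply: oz_refl.
case: (oz_total T (f i)) => h.
- exists (f i); split; first exact: oz_trans h.
  by move=> j; rewrite inE => /predU1P [->|/hT hj]; [apply: oz_refl | apply: oz_trans hj h].
- by exists T; split => // j; rewrite inE => /predU1P [->|/hT].
Qed.

End OrderedZmod.

Section FourierMotzkin.
Variables (R : realFieldType) (Z : zmodType) (m : nat).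

(* A row [r] stands for the inequality [\sum_i co r i * v i >= rh r] on
   [v : 'I_m -> R]; the extra constant [mc r : Z] serves to read it also as
   [\sum_i co r i * p i >= mc r + B * rh r] on points [p] of [Z^m] (see
   [zrow_sat]), a reading that derivations preserve as well. *)
Definition frow := ({ffun 'I_m -> int} * int * Z)%type.
Definition co (r : frow) (i : 'I_m) : int := r.1.1 i.
Definition rh (r : frow) : int := r.1.2.
Definition mc (r : frow) : Z := r.2.

Definition radd (r1 r2 : frow) : frow :=
  ([ffun i => co r1 i + co r2 i], rh r1 + rh r2, mc r1 + mc r2).
Definition rscale (n : nat) (r : frow) : frow :=
  ([ffun i => co r i *+ n], rh r *+ n, mc r *+ n).

Lemma co_radd r1 r2 i : co (radd r1 r2) i = co r1 i + co r2 i.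
Proof. by rewrite /co ffunE. Qed.
Lemma co_rscale n r i : co (rscale n r) i = co r i *+ n.
Proof. by rewrite /co ffunE. Qed.

Inductive derivable (s : seq frow) : frow -> Prop :=
  | der_mem r : r \in s -> derivable s r
  | der_add r1 r2 : derivable s r1 -> derivable s r2 -> derivable s (radd r1 r2)
  | der_scale n r : derivable s r -> derivable s (rscale n r).

Lemma derivable_trans s s' r :
  (forall r', r' \in s' -> derivable s r') -> derivable s' r -> derivable s r.
Proof. by move=> hs'; elim=> {r} [r /hs' //|r1 r2 _ h1 _ h2|n r _ h]; constructor. Qed.

Definition row_val (r : frow) (v : 'I_m -> R) : R := \sum_i (co r i)%:~R * v i.
Definition row_sat (v : 'I_m -> R) (r : frow) := (rh r)%:~R <= row_val r v.

Lemma row_val_radd r1 r2 v : row_val (radd r1 r2) v = row_val r1 v + row_val r2 v.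
Proof.
by rewrite /row_val -big_split; apply: eq_bigr => i _; rewrite co_radd rmorphD mulrDl.
Qed.

Lemma row_val_rscale n r v : row_val (rscale n r) v = row_val r v *+ n.
Proof.
by rewrite /row_val -sumrMnl; apply: eq_bigr => i _; rewrite co_rscale rmorphMn mulrnAl.
Qed.

Lemma separate (Ls Us : seq R) : (forall l u, l \in Ls -> u \in Us -> l <= u) ->
  exists t, (forall l, l \in Ls -> l <= t) /\ (forall u, u \in Us -> t <= u).
Proof.
elim: Ls => [|l Ls IH] hLU.
  elim: Us {hLU} => [|u Us [t [_ ht]]]; first by exists 0.
  exists (Num.min u t); split => // w; rewrite inE => /predU1P [->|/ht hw].
    by rewrite ge_min lexx.
  by rewrite ge_min hw orbT.
have [|t [ht1 ht2]] := IH; first by move=> l' u hl hu; apply: hLU; rewrite ?inE ?hl ?orbT.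
exists (Num.max l t); split => [w|u hu].
  by rewrite inE => /predU1P [->|/ht1 hw]; rewrite le_max ?lexx ?hw ?orbT.
by rewrite ge_max ht2 // hLU ?mem_head.
Qed.

Lemma mulrn_absz (y : R) (z : int) : y *+ `|z|%N = y * `|z%:~R|.
Proof. by rewrite -mulr_natr natr_absz intr_norm. Qed.

Section Elimination.
Variable x : 'I_m.

Definition comb (p q : frow) : frow := radd (rscale `|co q x| p) (rscale `|co p x| q).

Definition elim_rows (s : seq frow) : seq frow :=
  [seq r <- s | co r x == 0] ++
  [seq comb p q | p <- [seq r <- s | 0 < co r x], q <- [seq r <- s | co r x < 0]].

Lemma elim_rowsP s (P : frow -> Prop) :
  (forall r, r \in s -> co r x = 0 -> P r) ->
  (forall p q, p \in s -> q \in s -> 0 < co p x -> co q x < 0 -> P (comb p q)) ->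
  forall r, r \in elim_rows s -> P r.
Proof.
move=> h0 hpq r; rewrite mem_cat => /orP [|/allpairsP [[p q] /= [+ + ->]]].
  by rewrite mem_filter => /andP [/eqP hr rs]; apply: h0.
by rewrite !mem_filter => /andP [hp ps] /andP [hq qs]; apply: hpq.
Qed.

Lemma elim_rows_derivable s r : r \in elim_rows s -> derivable s r.
Proof.
move: r; apply: elim_rowsP => [r rs _|p q ps qs _ _]; first exact: der_mem.
by apply: der_add; apply: der_scale; apply: der_mem.
Qed.

Lemma co_comb_pivot p q : 0 < co p x -> co q x < 0 -> co (comb p q) x = 0.
Proof.
rewrite co_radd !co_rscale; case: (co p x) => // a _; case: (co q x) => // b _.
rewrite NegzE mulNrn /= -[a%:Z]natz -[b.+1%:Z]natz -!mulrnA mulnC.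
exact: subrr.
Qed.

Lemma co_elim_rows s i : (forall r, r \in s -> co r i = 0 \/ i = x) ->
  forall r, r \in elim_rows s -> co r i = 0.
Proof.
move=> hs; apply: elim_rowsP => [r rs hr|p q ps qs hp hq].
  by case: (hs r rs) => [//|->].
case: (hs p ps) => [hpi|->]; last exact: co_comb_pivot.
case: (hs q qs) => [hqi|->]; last exact: co_comb_pivot.
by rewrite co_radd !co_rscale hpi hqi !mul0rn addr0.
Qed.

Definition upd (v : 'I_m -> R) (t : R) i := if i == x then t else v i.
Definition rest (r : frow) v := row_val r v - (co r x)%:~R * v x.
Definition lower (r : frow) v := ((rh r)%:~R - rest r v) / (co r x)%:~R.
Definition upper (r : frow) v := (rest r v - (rh r)%:~R) / - (co r x)%:~R.

Lemma row_val_upd r v t : row_val r (upd v t) = rest r v + (co r x)%:~R * t.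
Proof.
rewrite /rest /row_val (bigD1 x) //= [in RHS](bigD1 x) //= /upd eqxx.
rewrite (eq_bigr (fun i => (co r i)%:~R * v i)); first ring.
by move=> i /negbTE ->.
Qed.

Lemma row_sat_upd_pos r v t : 0 < co r x -> lower r v <= t -> row_sat (upd v t) r.
Proof.
move=> hr; rewrite /lower /row_sat row_val_upd ler_pdivrMr ?ltr0z //.
by rewrite lerBlDl mulrC.
Qed.

Lemma row_sat_upd_neg r v t : co r x < 0 -> t <= upper r v -> row_sat (upd v t) r.
Proof.
move=> hr; rewrite /upper /row_sat row_val_upd ler_pdivlMr ?oppr_gt0 ?ltrz0 //.
by rewrite mulrN mulrC lerNl opprB lerBlDl.
Qed.

Lemma lower_le_upper v p q : 0 < co p x -> co q x < 0 ->
  row_sat v (comb p q) -> lower p v <= upper q v.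
Proof.
rewrite -(ltr0z R) -(ltrz0 R) /row_sat row_val_radd !row_val_rscale /rh /=.
rewrite -/(rh p) -/(rh q) rmorphD !rmorphMn /= !mulrn_absz /lower /upper /rest.
set a := (co p x)%:~R; set b := (co q x)%:~R => ha hb.
rewrite (gtr0_norm ha) (ltr0_norm hb) ler_pdivrMr // mulrAC ler_pdivlMr ?oppr_gt0 // => h.
rewrite -subr_ge0; rewrite -subr_ge0 in h.
by rewrite (_ : _ - _ = row_val p v * - b + row_val q v * a -
  ((rh p)%:~R * - b + (rh q)%:~R * a)) //; ring.
Qed.

Lemma elim_rows_lift s v : (forall r, r \in elim_rows s -> row_sat v r) ->
  exists t, forall r, r \in s -> row_sat (upd v t) r.
Proof.
move=> hv.
have [|t [ht1 ht2]] := separate (Ls := map (lower^~ v) [seq r <- s | 0 < co r x])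
  (Us := map (upper^~ v) [seq r <- s | co r x < 0]).
  move=> _ _ /mapP [p + ->] /mapP [q + ->]; rewrite !mem_filter.
  move=> /andP [hp ps] /andP [hq qs]; apply: lower_le_upper => //.
  by apply: hv; rewrite mem_cat allpairs_f ?orbT // mem_filter ?hp ?hq.
exists t => r rs; case: (ltrgtP (co r x) 0) => hr.
- by apply: (row_sat_upd_neg hr); apply/ht2/mapP; exists r; rewrite // mem_filter hr.
- by apply: (row_sat_upd_pos hr); apply/ht1/mapP; exists r; rewrite // mem_filter hr.
- have: row_sat v r by apply: hv; rewrite mem_cat mem_filter hr eqxx rs.
  by rewrite /row_sat row_val_upd /rest hr mulr0z !mul0r subr0 addr0.
Qed.

End Elimination.

Definition certificate (s : seq frow) (r : frow) :=
  [/\ derivable s r, forall i, co r i = 0 & 0 < rh r].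

Lemma fourier_motzkin_from n (s : seq frow) :
  (forall r (i : 'I_m), r \in s -> (n <= i)%N -> co r i = 0) ->
  (exists v, forall r, r \in s -> row_sat v r) \/ exists r, certificate s r.
Proof.
elim: n s => [|n IH] s hs.
  case: (boolP (all (fun r => rh r <= 0) s)) => [/allP hall|/allPn [r rs hr]].
    left; exists (fun _ => 0) => r rs; rewrite /row_sat /row_val big1 ?lerz0 ?hall //.
    by move=> i _; rewrite mulr0.
  by right; exists r; split; [apply: der_mem | move=> i; apply: hs | rewrite ltNge].
case: (ltnP n m) => hnm; last first.
  by apply: IH => r i _ hi; move: (ltn_ord i); rewrite ltnNge (leq_trans hnm hi).
pose x := Ordinal hnm.
have hs' r (i : 'I_m) : r \in elim_rows x s -> (n <= i)%N -> co r i = 0.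
  move=> hr hi; apply: co_elim_rows hr => r' r's.
  case: (ltnP n i) => hni; first by left; apply: hs.
  by right; apply: val_inj; apply/eqP; rewrite /= eqn_leq hi hni.
case: (IH _ hs') => [[v /elim_rows_lift [t ht]]|[r [hr1 hr2 hr3]]].
  by left; exists (upd x v t).
right; exists r; split => //; apply: derivable_trans hr1 => r'.
exact: elim_rows_derivable.
Qed.

Theorem fourier_motzkin (s : seq frow) :
  (exists v, forall r, r \in s -> row_sat v r) \/ exists r, certificate s r.
Proof. by apply: (@fourier_motzkin_from m) => r i _ hi; move: (ltn_ord i); rewrite ltnNge hi. Qed.

End FourierMotzkin.

Lemma mulrz_Mn (Z : zmodType) (x : Z) (n : int) (c : nat) : x *~ (n *+ c) = x *~ n *+ c.
Proof. by rewrite -mulr_natr mulrzA mulrz_nat. Qed.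

Section IntegerRows.
Variables (Z : zmodType) (le : rel Z) (m : nat).
Hypothesis hle : is_ordered_zmod le.

Definition zrow_sat (B : Z) (p : 'I_m -> Z) (r : frow Z m) :=
  le (mc r + B *~ rh r) (\sum_i p i *~ co r i).

Lemma zrow_sat_derivable B p s r :
  (forall r', r' \in s -> zrow_sat B p r') -> derivable s r -> zrow_sat B p r.
Proof.
move=> hs; elim=> {r} [r /hs //|r1 r2 _ h1 _ h2|n r _ h].
- rewrite /zrow_sat /= mulrzDr addrACA.
  under eq_bigr do rewrite co_radd mulrzDr.
  by rewrite big_split /=; apply: oz_add.
- rewrite /zrow_sat /= mulrz_Mn -mulrnDl.
  under eq_bigr do rewrite co_rscale mulrz_Mn.
  by rewrite sumrMnl; apply: oz_muln.
Qed.

Lemma certificate_zrow_unsat (one : Z) s r : ltR le 0 one -> certificate s r ->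
  exists B, forall p, ~ forall r', r' \in s -> zrow_sat B p r'.
Proof.
move=> hone [hr hco hrh]; have [B [hB0 hB]] := oz_ub hle id [:: one - mc r].
exists B => p /zrow_sat_derivable /(_ hr).
rewrite /zrow_sat big1 => [h|i _]; last by rewrite hco mulr0z.
have hoB : le one (mc r + B).
  by rewrite -(subrKC (mc r) one); apply: oz_addl => //; apply: hB; rewrite mem_head.
have hBr : le (mc r + B) (mc r + B *~ rh r) by apply: oz_addl => //; apply: oz_le_mulz.
exact: oz_lt_irr (oz_lt_le_trans hle hone (oz_trans hle hoB (oz_trans hle hBr h))).
Qed.

End IntegerRows.

Lemma rat_common_denominator n (v : 'I_n -> rat) :
  exists2 D : int, 0 < D & exists w : 'I_n -> int, forall i, (w i)%:~R = v i * D%:~R.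
Proof.
exists (\prod_i denq (v i)); first by apply: prodr_gt0 => i _; apply: denq_gt0.
exists (fun i => numq (v i) * \prod_(j | j != i) denq (v j)) => i.
by rewrite [in RHS](bigD1 i) //= !intrM numqE mulrA.
Qed.

Lemma supp_None (T : eqType) m (x : 'I_m -> option T) J i :
  supp x = J -> i \notin J -> x i = None.
Proof. by move=> <-; rewrite inE negbK => /eqP. Qed.

Lemma supp_Some (T : eqType) m (x : 'I_m -> option T) J i :
  supp x = J -> i \in J -> exists t, x i = Some t.
Proof. by move=> <-; rewrite inE; case: (x i) => // t _; exists t. Qed.

Definition beyond (Z : zmodType) (le : rel Z) (m : nat) (J : {set 'I_m}) (B : Z)
    (a p : 'I_m -> option Z) :=
  (forall j, j \in J -> p j = a j) /\
  (forall i, i \notin J -> p i = None \/ exists2 z, p i = Some z & le B z).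

Definition escapes (Z : zmodType) (le : rel Z) (m : nat) (S : ('I_m -> option Z) -> Prop)
    (J : {set 'I_m}) (a : 'I_m -> option Z) :=
  forall B, exists2 p, S p & beyond le J B a p.

Lemma escapesI (Z : zmodType) (le : rel Z) m (S : ('I_m -> option Z) -> Prop) J H a :
  escapes le S J a -> (forall a', S a' -> escapes le S H a') -> escapes le S (H :&: J) a.
Proof.
move=> haJ hH B; have [a1 /hH /(_ B) [a2 a2S [h2H h2H']] [h1J h1J']] := haJ B.
exists a2 => //; split=> [j|i]; rewrite inE.
  by case/andP=> hjH hjJ; rewrite h2H // h1J.
rewrite negb_and; case: (boolP (i \in H)) => [hiH /= hiJ|hiH _]; last exact: h2H'.
by rewrite h2H //; apply: h1J'.
Qed.

Section Recession.
Variables (Z : zmodType) (le : rel Z) (one : Z) (m : nat).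
Variables (I : {set 'I_m}) (A : ('I_m -> option Z) -> Prop).
Variables (k l : nat) (c : 'I_k -> 'I_m -> int) (g : 'I_k -> Z).
Variables (d : 'I_l -> 'I_m -> int) (rho nn : 'I_l -> nat).
Hypotheses (hle : is_ordered_zmod le) (hone : ltR le 0 one).
Hypothesis hrho : forall j, (rho j < nn j)%N.
Hypothesis hA : forall x, A x <->
  [/\ supp x = I,
      forall j, le (g j) (linf I (c j) x) &
      forall j, congr (nn j) (linf I (d j) x) (one *+ rho j)].

Lemma A_supp a : A a -> supp a = I. Proof. by case/hA. Qed.

Definition urow (s : int) (i : 'I_m) (b : int) (z : Z) : frow Z m :=
  ([ffun i' => if i' == i then s else 0], b, z).
Definition crow (j : 'I_k) : frow Z m := ([ffun i => if i \in I then c j i else 0], 0, g j).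

(* Read on a rational [v], these rows say that [v] is a recession direction of
   the linear constraints, zero on [J] and [>= 1] on [I :\: J]; read on a point
   of [Z^m] with bound [B], that the point satisfies the linear constraints,
   equals [cc] on [J] and is [>= B] on [I :\: J]. *)
Definition rec_rows (J : {set 'I_m}) (cc : 'I_m -> Z) : seq (frow Z m) :=
  [seq crow j | j <- enum 'I_k] ++ [seq urow 1 i 1 0 | i <- enum (I :\: J)] ++
  [seq urow 1 i 0 (cc i) | i <- enum J] ++ [seq urow (-1) i 0 (- cc i) | i <- enum J].

Lemma row_val_urow (v : 'I_m -> rat) s i b z : row_val (urow s i b z) v = s%:~R * v i.
Proof.
rewrite /row_val (bigD1 i) //= big1 => [|i' /negbTE hi']; first by rewrite /co ffunE eqxx addr0.
by rewrite /co ffunE hi' mul0r.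
Qed.

Lemma zsum_urow (p : 'I_m -> Z) s i b z : \sum_i' p i' *~ co (urow s i b z) i' = p i *~ s.
Proof.
rewrite (bigD1 i) //= big1 => [|i' /negbTE hi']; first by rewrite /co ffunE eqxx addr0.
by rewrite /co ffunE hi' mulr0z.
Qed.

Lemma rec_rows_sat J cc (v : 'I_m -> rat) :
  (forall r, r \in rec_rows J cc -> row_sat v r) ->
  [/\ forall i, i \in J -> v i = 0, forall i, i \in I :\: J -> 1 <= v i &
      forall j, 0 <= \sum_(i in I) (c j i)%:~R * v i].
Proof.
move=> hv; split.
- move=> i hi; apply/eqP; rewrite eq_le; apply/andP; split.
    have := hv (urow (-1) i 0 (- cc i)).
    rewrite /row_sat row_val_urow mulN1r oppr_ge0; apply; rewrite /rec_rows !mem_cat.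
    by apply/or4P/Or44/mapP; exists i; rewrite ?mem_enum.
  have := hv (urow 1 i 0 (cc i)); rewrite /row_sat row_val_urow mul1r; apply.
  by rewrite /rec_rows !mem_cat; apply/or4P/Or43/mapP; exists i; rewrite ?mem_enum.
- move=> i hi; have := hv (urow 1 i 1 0).
  rewrite /row_sat row_val_urow mul1r; apply.
  by rewrite /rec_rows !mem_cat; apply/or4P/Or42/mapP; exists i; rewrite ?mem_enum.
- move=> j; have := hv (crow j); rewrite /row_sat /row_val /=.
  have -> : \sum_i (co (crow j) i)%:~R * v i = \sum_(i in I) (c j i)%:~R * v i.
    by rewrite [RHS]big_mkcond; apply: eq_bigr => i _; rewrite /co ffunE; case: (i \in I); rewrite ?mul0r.
  by apply; rewrite /rec_rows !mem_cat; apply/or4P/Or41/mapP; exists j; rewrite ?mem_enum.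
Qed.

Lemma rec_rows_zrow_sat J a0 B p : A p -> beyond le J B a0 p ->
  forall r, r \in rec_rows J (fun i => odflt 0 (a0 i)) ->
  zrow_sat le B (fun i => odflt 0 (p i)) r.
Proof.
move=> pA [pJ pJ'] r; rewrite /rec_rows !mem_cat => /or4P [] /mapP [i + ->].
- move=> _; have [_ /(_ i) hg _] := (hA p).1 pA.
  rewrite /zrow_sat /= mulr0z addr0 (_ : \sum_i' _ = linf I (c i) p) //.
  rewrite /linf [RHS]big_mkcond; apply: eq_bigr => i' _.
  by rewrite /co ffunE; case: (i' \in I); rewrite ?mulr0z.
- rewrite mem_enum inE => /andP [hiJ hiI].
  rewrite /zrow_sat zsum_urow /= add0r !mulr1z.
  case: (pJ' i hiJ) => [/eqP|[z -> //]]; apply: contraTT => _.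
  by have [z ->] := supp_Some (A_supp pA) hiI.
- rewrite mem_enum => hi; rewrite /zrow_sat zsum_urow /= mulr0z addr0 mulr1z.
  by rewrite pJ //; apply: oz_refl.
- rewrite mem_enum => hi; rewrite /zrow_sat zsum_urow /= mulr0z addr0 mulrN1z.
  by rewrite pJ //; apply: oz_refl.
Qed.

Lemma rational_recession J a0 : escapes le A J a0 ->
  exists v : 'I_m -> rat, [/\ forall i, i \in J -> v i = 0,
    forall i, i \in I :\: J -> 1 <= v i & forall j, 0 <= \sum_(i in I) (c j i)%:~R * v i].
Proof.
move=> hfar; have [[v hv]|[r cert]] := fourier_motzkin rat
  (rec_rows J (fun i => odflt 0 (a0 i))); first by exists v; apply: rec_rows_sat hv.
have [B hB] := certificate_zrow_unsat hle hone cert; have [p pA hp] := hfar B.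
by case: (hB (fun i => odflt 0 (p i))); apply: rec_rows_zrow_sat.
Qed.

Lemma integral_recession J a0 : escapes le A J a0 ->
  exists w : 'I_m -> int, [/\ forall i, i \in J -> w i = 0,
    forall i, i \in I :\: J -> 0 < w i & forall j, 0 <= \sum_(i in I) w i * c j i].
Proof.
move=> /rational_recession [v [hv0 hv1 hvc]].
have [D hD [w hw]] := rat_common_denominator v.
exists w; split => [i hi|i hi|j].
- by apply/eqP; rewrite -(intr_eq0 rat) hw hv0 ?mul0r.
- by rewrite -(ltr0z rat) hw (lt_le_trans ltr01) // mulr_ege1 ?ler1z ?hv1.
- rewrite -(ler0z rat) rmorph_sum /=.
  under eq_bigr do rewrite intrM hw mulrAC mulrC [v _ * _]mulrC.
  by rewrite -mulr_sumr; apply: mulr_ge0; [rewrite ler0z; apply: ltW | apply: hvc].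
Qed.

Definition translate (a : 'I_m -> option Z) (y : 'I_m -> Z) i :=
  if i \in I then Some (odflt 0 (a i) + y i) else None.

Lemma linf_translate cc a y :
  linf I cc (translate a y) = linf I cc a + \sum_(i in I) y i *~ cc i.
Proof. by rewrite /linf -big_split; apply: eq_bigr => i hi; rewrite /translate hi mulrzDl. Qed.

Lemma A_translate a (w : 'I_m -> int) T : A a -> le 0 T ->
  (forall j, 0 <= \sum_(i in I) w i * c j i) ->
  A (translate a (fun i => T *~ (w i *+ \prod_j nn j))).
Proof.
move=> /hA [_ ag acong] hT hw; pose N := (\prod_j nn j)%N.
have lin cc : linf I cc (translate a (fun i => T *~ (w i *+ N))) =
    linf I cc a + T *~ ((\sum_(i in I) w i * cc i) *+ N).
  rewrite linf_translate mulrz_Mn mulrz_sumr -sumrMnl; congr (_ + _).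
  by apply: eq_bigr => i _; rewrite -mulrzA mulrnAl mulrz_Mn.
apply/hA; split => [|j|j].
- by apply/setP => i; rewrite !inE /translate; case: (i \in I).
- rewrite lin; apply: oz_trans (ag j) _ => //; rewrite -{1}[linf _ _ a]addr0.
  by apply: oz_addl => //; apply/oz_mulz_ge0/mulrn_wge0/hw.
- have [y hy] := acong j; rewrite lin /N (bigD1 j) //= mulnC.
  exists (y + T *~ ((\sum_(i in I) w i * d j i) *+ \prod_(i | i != j) nn i)).
  by rewrite mulrnA mulrz_Mn mulrnDl -hy addrAC.
Qed.

Lemma recession J a0 a : escapes le A J a0 -> A a -> escapes le A J a.
Proof.
move=> /integral_recession [w [hwJ hwI hwc]] aA B.
have [T [hT0 hT]] := oz_ub hle (fun i => B - odflt 0 (a i)) (enum 'I_m).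
have hN : (0 < \prod_j nn j)%N by apply: prodn_gt0 => j; apply: leq_ltn_trans (hrho j).
exists (translate a (fun i => T *~ (w i *+ \prod_j nn j))); first exact: A_translate.
split=> [j hj|i hi]; rewrite /translate.
  case: ifP => hjI; last by rewrite (supp_None (A_supp aA)) ?hjI.
  by have [z hz] := supp_Some (A_supp aA) hjI; rewrite hwJ // mul0rn mulr0z addr0 hz.
case: ifPn => hiI; [right | by left]; eexists; first by [].
have hBT : le B (odflt 0 (a i) + T).
  by rewrite -{1}(subrKC (odflt 0 (a i)) B); apply: oz_addl => //; apply: hT; rewrite mem_enum.
apply: oz_trans hBT _ => //; apply: oz_addl => //; apply: oz_le_mulz => //.
by rewrite pmulrn_rgt0 // hwI // inE hi hiI.
Qed.

End Recession.

Section DivisibleHull.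
Variables (Z Q : zmodType) (le : rel Z) (one : Z) (qle : rel Q) (e : Z -> Q).
Hypotheses (hZ : is_zgroup le one) (hQ : is_divisible_hull le qle e).

Lemma zgroup_ordered : is_ordered_zmod le. Proof. by case: hZ. Qed.
Lemma zgroup_one_gt0 : ltR le 0 one. Proof. by case: hZ. Qed.
Lemma zgroup_one_min x : ltR le 0 x -> le one x. Proof. by case: hZ => _ _ + _; apply. Qed.
Lemma hull_ordered : is_ordered_zmod qle. Proof. by case: hQ. Qed.
Lemma hullB x y : e (x - y) = e x - e y. Proof. by case: hQ => _ + _ _ _; apply. Qed.
Lemma hull_le x y : le x y <-> qle (e x) (e y). Proof. by case: hQ => _ _ + _ _; apply. Qed.
Lemma hull_divisible (q : Q) n : (0 < n)%N -> exists r, r *+ n = q.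
Proof. by case: hQ => _ _ _ + _; apply. Qed.
Lemma hull_multiple (q : Q) : exists n, (0 < n)%N /\ exists z, q *+ n = e z.
Proof. by case: hQ => _ _ _ _; apply. Qed.

Local Notation hle := zgroup_ordered.
Local Notation hqle := hull_ordered.

Lemma hull0 : e 0 = 0. Proof. by have := hullB 0 0; rewrite !subrr. Qed.
Lemma hullN x : e (- x) = - e x. Proof. by have := hullB 0 x; rewrite hull0 !sub0r. Qed.
Lemma hullD x y : e (x + y) = e x + e y.
Proof. by have := hullB x (- y); rewrite opprK hullN opprK. Qed.

Lemma hull_inj : injective e.
Proof. by move=> x y exy; apply: (oz_anti hle); apply/hull_le; rewrite exy; exact: oz_refl hqle _. Qed.

Lemma hull_lt x y : ltR le x y <-> ltR qle (e x) (e y).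
Proof.
split=> [[/hull_le h1 h2]|[/hull_le h1 h2]]; split=> // exy; first exact/h2/hull_inj.
by apply: h2; rewrite exy.
Qed.

Lemma zgroup_lt_succ x y : ltR le x y -> le (x + one) y.
Proof.
move=> [hxy ne]; have hpos : ltR le 0 (y - x).
  split; first exact: (oz_subr_ge0 hle x y).1. by move/esym/subr0_eq/esym.
by have := oz_addr hle x (zgroup_one_min hpos); rewrite subrK addrC.
Qed.

Lemma hull_one_gt0 : ltR qle 0 (e one). Proof. by rewrite -hull0; apply/hull_lt/zgroup_one_gt0. Qed.

Lemma hull_half_one : exists2 r, ltR qle 0 r & r + r = e one.
Proof.
have [r hr] := hull_divisible (e one) (isT : (0 < 2)%N).
exists r; last by rewrite -hr mulr2n.
case: (oz_total hqle r 0) => h; last first.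
  by split => // r0; move: hull_one_gt0; rewrite -hr -r0 mul0rn; apply: oz_lt_irr.
have := oz_add hqle h h; rewrite addr0 -mulr2n hr => h'.
by case: (oz_lt_irr (oz_lt_le_trans hqle hull_one_gt0 h')).
Qed.

Lemma hull_lattice_unique r q z z' : r + r = e one ->
  ltR qle (q - r) (e z) -> ltR qle (e z) (q + r) ->
  ltR qle (q - r) (e z') -> ltR qle (e z') (q + r) -> z = z'.
Proof.
move=> hr; wlog hzz : z z' / le z z'.
  move=> hw h1 h2 h3 h4; case: (oz_total hle z z') => h; first exact: hw.
  by apply/esym; apply: hw.
move=> h1 _ _ h4; apply/eqP; case: eqP => // hne; exfalso.
move/hull_le: (zgroup_lt_succ (conj hzz hne)); rewrite hullD => h5.
have h6 := oz_lt_addr hqle r h1; rewrite subrK in h6.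
have h7 := oz_lt_addr hqle (- r) h4; rewrite addrK in h7.
have := oz_lt_addr hqle r (oz_lt_trans hqle h7 h6); rewrite subrK -addrA hr => h8.
exact: oz_lt_irr (oz_lt_le_trans hqle h8 h5).
Qed.

Lemma hull_ub q : exists B, ltR qle q (e B).
Proof.
have [n [hn [z hz]]] := hull_multiple q.
have [B [hB0 hB]] := oz_ub hle id [:: z].
have hqB : qle q (e B).
  case: (oz_total hqle q 0) => hq.
    by apply: (oz_trans hqle hq); rewrite -hull0; apply/hull_le.
  apply: (oz_trans hqle (_ : qle q (q *+ n))); first exact: oz_le_muln hqle _ _ hq hn.
  by rewrite hz; apply/hull_le/hB; rewrite mem_head.
exists (B + one); apply: (oz_le_lt_trans hqle hqB).
by rewrite hullD; exact: (oz_ltDl hqle (e B) hull_one_gt0).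
Qed.

Lemma hull_ub_finite m (f : 'I_m -> Q) : exists B, forall i, ltR qle (f i) (e B).
Proof.
suff [B hB] : exists B, forall i, i \in enum 'I_m -> ltR qle (f i) (e B).
  by exists B => i; apply/hB/mem_enum.
elim: (enum 'I_m) => [|i s [B hB]]; first by exists 0.
have [B1 hB1] := hull_ub (f i).
case: (oz_total hle B B1) => /hull_le h.
  exists B1 => j; rewrite inE => /predU1P [-> //|/hB hj].
  exact: (oz_lt_le_trans hqle hj h).
exists B => j; rewrite inE => /predU1P [->|/hB //].
exact: (oz_lt_le_trans hqle hB1 h).
Qed.

Section Closure.
Variable m : nat.
Implicit Types (x : 'I_m -> option Q) (S : ('I_m -> option Z) -> Prop).

Definition box_lo (r : Q) x i := if x i is Some q then q - r else 0.
Definition box_hi (r : Q) x i := omap (fun q => q + r) (x i).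

Lemma box_ival r x i : ltR qle 0 r -> ival qle (box_lo r x i) (box_hi r x i) (x i).
Proof.
move=> hr; rewrite /box_lo /box_hi; case: (x i) => [q|] //=.
by exists q; split; last split; [| exact: (oz_ltBl hqle q hr) | exact: (oz_ltDl hqle q hr)].
Qed.

Lemma closure_ext (T : ('I_m -> option Q) -> Prop) x y :
  (forall i, x i = y i) -> closure qle T y -> closure qle T x.
Proof. by move=> hxy hy a b hx; apply: hy => i; rewrite -hxy. Qed.

Lemma closure_face (T : ('I_m -> option Q) -> Prop) J x :
  closure qle (face qle J T) x -> closure qle T x.
Proof. by move=> hx a b /hx [y [[hy _] /hy]]. Qed.

Lemma closure_None (T : ('I_m -> option Q) -> Prop) x i :
  closure qle T x -> (forall y, T y -> y i = None) -> x i = None.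
Proof.
move=> hx hT; case hxi: (x i) => [q|] //.
have [y [/hT hyi /(_ i)]] := hx _ _ (box_ival x^~ hull_one_gt0).
by rewrite /box_hi hxi hyi => [[q' []]].
Qed.

Lemma closure_embset_lattice S x i q lo hi : closure qle (embset e S) x ->
  x i = Some q -> ltR qle lo q -> ltR qle q hi ->
  exists z, ltR qle lo (e z) /\ ltR qle (e z) hi.
Proof.
move=> hx hxi hlo hhi.
pose a i' := if i' == i then lo else box_lo (e one) x i'.
pose b i' := if i' == i then Some hi else box_hi (e one) x i'.
have [|y [[p _ hyp] /(_ i)]] := hx a b.
  move=> i'; rewrite /a /b; case: eqP => [->|_]; last exact: box_ival hull_one_gt0.
  by rewrite hxi; exists q.
rewrite /a /b eqxx hyp /embpt; case: (p i) => [z|] [q' [//= [<-] hz]].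
by exists z.
Qed.

Lemma closure_embset_Some S x i q :
  closure qle (embset e S) x -> x i = Some q -> exists z, q = e z.
Proof.
move=> hx hxi; have [r hr0 hr] := hull_half_one.
have hq_r := oz_ltBl hqle q hr0; have hqr := oz_ltDl hqle q hr0.
have [z [hz1 hz2]] := closure_embset_lattice hx hxi hq_r hqr.
exists z; apply/eqP; case: eqP => // hne; exfalso.
case: (oz_total hqle (e z) q) => hzq.
- have [|z2 [h1 h2]] := closure_embset_lattice (lo := e z) hx hxi _ hqr.
    by split => // hzq'; apply: hne.
  have ez := hull_lattice_unique hr hz1 hz2 (oz_lt_trans hqle hz1 h1) h2.
  by rewrite -ez in h1; apply: oz_lt_irr h1.
- have [|z2 [h1 h2]] := closure_embset_lattice (hi := e z) hx hxi hq_r _.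
    by split => // hzq'; apply: hne.
  have ez := hull_lattice_unique hr hz1 hz2 h1 (oz_lt_trans hqle h2 hz2).
  by rewrite -ez in h2; apply: oz_lt_irr h2.
Qed.

Lemma face_embset_near S J x B : face qle J (embset e S) x ->
  exists2 p, S p & (forall j, j \in J -> omap e (p j) = x j) /\
    forall i, i \notin J -> p i = None \/ exists2 z, p i = Some z & le B z.
Proof.
move=> [hx hsupp]; have [r hr0 hr] := hull_half_one.
pose a i := if i \in J then box_lo r x i else e B.
pose b i := if i \in J then box_hi r x i else None.
have [|y [[p Sp hyp] hy]] := hx a b.
  move=> i; rewrite /a /b; case: ifPn => hi; first exact: box_ival.
  by rewrite (supp_None hsupp hi).
exists p => //; split=> [j hj|i hi].
- have [q hxj] := supp_Some hsupp hj; have [z hqz] := closure_embset_Some hx hxj.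
  have := hy j; rewrite hyp /embpt /a /b hj /box_lo /box_hi hxj hqz /=.
  case: (p j) => [z'|] [q' [//= [<-] [h1 h2]]].
  by rewrite (hull_lattice_unique hr h1 h2 (oz_ltBl hqle (e z) hr0) (oz_ltDl hqle (e z) hr0)).
- have := hy i; rewrite hyp /embpt /a /b (negbTE hi); case: (p i) => [z|] /=; last by left.
  by move/hull_lt=> [hBz _]; right; exists z.
Qed.

Lemma face_embset_escapes S J x : face qle J (embset e S) x ->
  exists2 a, S a & (forall i, x i = embpt e (projJ J a) i) /\ escapes le S J a.
Proof.
move=> hx; have [a Sa [haJ haJ']] := face_embset_near 0 hx.
exists a => //; split=> [i|B].
  rewrite /embpt /projJ; case: ifPn => [/haJ //|hi].
  by case: hx => _ /supp_None ->.
have [p Sp [hpJ hpJ']] := face_embset_near B hx.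
exists p => //; split=> // j hj.
by move: (hpJ j hj); rewrite -(haJ j hj); case: (p j) (a j) => [z|] [z'|] //= [/hull_inj ->].
Qed.

Lemma closure_projJ (T : ('I_m -> option Q) -> Prop) J p :
  escapes le (fun p' => T (embpt e p')) J p -> closure qle T (embpt e (projJ J p)).
Proof.
move=> hfar a b hx; have [B hB] := hull_ub_finite a.
have [p' Tp' [hJ hJ']] := hfar B; exists (embpt e p'); split => // i.
have := hx i; rewrite /embpt /projJ; case: ifPn => [/hJ -> //|hi /=].
case: (b i) => [bi [q [//]]|_] /=; case: (hJ' i hi) => [-> //|[z -> hz]] /=.
exact: (oz_lt_le_trans hqle (hB i) (proj1 (hull_le _ _) hz)).
Qed.

End Closure.
End DivisibleHull.

Section Faces.
Variables (Z Q : zmodType) (le : rel Z) (one : Z) (qle : rel Q) (e : Z -> Q).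
Hypotheses (hZ : is_zgroup le one) (hQ : is_divisible_hull le qle e).
Variables (m : nat) (I : {set 'I_m}) (A : ('I_m -> option Z) -> Prop).
Hypothesis hA : basic_presburger le one I A.

Local Notation F J := (face qle J (embset e A)).

Lemma presburger_supp a : A a -> supp a = I.
Proof. by have [k [l [c [g [d [rho [nn [_ hAd]]]]]]]] := hA; case/hAd. Qed.

Lemma face_recession J a : (exists x, F J x) -> A a -> escapes le A J a.
Proof.
move=> [x /(face_embset_escapes hZ hQ) [a0 _ [_ ha0]]].
have [k [l [c [g [d [rho [nn [hrho hAd]]]]]]]] := hA.
exact: (recession (zgroup_ordered hZ) (zgroup_one_gt0 hZ) hrho hAd ha0).
Qed.

Lemma face_subset J : (exists x, F J x) -> J \subset I.
Proof.
move=> [x hx]; have [a aA [hxa _]] := face_embset_escapes hZ hQ hx.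
apply/subsetP => j hj; apply/negPn/negP => hjI.
have [q hxj] := supp_Some (proj2 hx) hj.
by move: (hxa j); rewrite hxj /embpt /projJ hj (supp_None (presburger_supp aA) hjI).
Qed.

Lemma face_projJ (K : {set 'I_m}) a : K \subset I -> A a -> escapes le A K a ->
  F K (embpt e (projJ K a)).
Proof.
move=> hKI aA ha; split.
  by apply: (closure_projJ hZ hQ) => B; have [a' a'A ha'] := ha B; exists a' => //; exists a'.
apply/setP => i; rewrite !inE /embpt /projJ; case: ifP => //= hi.
by have [z ->] := supp_Some (presburger_supp aA) (subsetP hKI i hi).
Qed.

Lemma faceE J : (exists x, F J x) ->
  forall x, F J x <-> exists2 a, A a & forall i, x i = embpt e (projJ J a) i.
Proof.
move=> hJ x; split=> [/(face_embset_escapes hZ hQ) [a aA [hxa _]]|[a aA hxa]].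
  by exists a.
have [hcl hsupp] := face_projJ (face_subset hJ) aA (face_recession hJ aA).
split; first exact: closure_ext hxa hcl.
by rewrite -hsupp; apply/setP => i; rewrite !inE hxa.
Qed.

Lemma face_spec J H : (exists x, F J x) -> (exists x, F H x) ->
  spec qle (F H) (F J) <-> H \subset J.
Proof.
move=> hJ hH; split=> [hHJ|hHJ x /(faceE hH) [a aA hxa]].
  have [x hx] := hH; apply/subsetP => h hh; apply/negPn/negP => hnJ.
  have [q hxh] := supp_Some (proj2 hx) hh.
  have := closure_None hZ hQ (hHJ x hx) (fun y hy => supp_None (proj2 hy) hnJ).
  by rewrite hxh.
apply: closure_ext hxa _; apply: (closure_projJ hZ hQ) => B.
have [a1 a1A [ha1H ha1H']] := face_recession hH aA B.
exists (projJ J a1); first by apply/(faceE hJ); exists a1 => // i; rewrite /embpt /projJ; case: ifP.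
split=> [j hj|i hi]; first by rewrite /projJ (subsetP hHJ j hj) ha1H.
by rewrite /projJ; case: ifP => _; [apply: ha1H' | left].
Qed.

Lemma face_face J H : (exists x, F J x) -> (exists x, F H x) -> H \subset J ->
  forall x, F H x <-> face qle H (F J) x.
Proof.
move=> hJ hH hHJ x; split=> [hx|[hcl hsupp]]; last by split=> //; apply: closure_face hcl.
by split; [apply: (proj2 (face_spec hJ hH) hHJ) | case: hx].
Qed.

Lemma faceI J H : (exists x, F J x) -> (exists x, F H x) -> exists x, F (H :&: J) x.
Proof.
move=> hJ hH; have [x /(faceE hJ) [a aA _]] := hJ.
exists (embpt e (projJ (H :&: J) a)); apply: (face_projJ _ aA).
  exact: subset_trans (subsetIr H J) (face_subset hJ).
by apply: escapesI (face_recession hJ aA) _ => a'; apply: face_recession.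
Qed.

End Faces.

Theorem proposition3p3
  (Z Q : zmodType) (le : rel Z) (one : Z) (qle : rel Q) (e : Z -> Q)
  (hZ : is_zgroup le one) (hQ : is_divisible_hull le qle e)
  (m : nat) (I : {set 'I_m}) (A : ('I_m -> option Z) -> Prop)
  (hA : basic_presburger le one I A)
  (J H : {set 'I_m})
  (hJ : exists x, face qle J (embset e A) x)
  (hH : exists x, face qle H (embset e A) x) :
  [/\ (* (1) F_J(A) = pi_J(A) *)
      (forall x, face qle J (embset e A) x <->
                 exists2 a, A a & forall i, x i = embpt e (projJ J a) i),
      (* (2) *)
      (H \subset J ->
        forall x, face qle H (embset e A) x <->
                  face qle H (face qle J (embset e A)) x),
      (* (3) *)
      (spec qle (face qle H (embset e A)) (face qle J (embset e A))
         <-> H \subset J),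
      (* (3), "in particular" *)
      ((forall J1 J2 : {set 'I_m},
          (exists x, face qle J1 (embset e A) x) ->
          (exists x, face qle J2 (embset e A) x) ->
          spec qle (face qle J1 (embset e A)) (face qle J2 (embset e A)) \/
          spec qle (face qle J2 (embset e A)) (face qle J1 (embset e A)))
       <->
       (forall J1 J2 : {set 'I_m},
          (exists x, face qle J1 (embset e A) x) ->
          (exists x, face qle J2 (embset e A) x) ->
          J1 \subset J2 \/ J2 \subset J1)) &
      (* (4) *)
      exists x, face qle (H :&: J) (embset e A) x].
Proof.
have hspec := face_spec hZ hQ hA.
split; [exact: (faceE hZ hQ hA hJ) | exact: (face_face hZ hQ hA hJ hH) |
  exact: (hspec _ _ hJ hH) | | exact: (faceI hZ hQ hA hJ hH)].
split=> hcmp J1 J2 h1 h2; case: (hcmp J1 J2 h1 h2) => h.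
- by left; apply/(hspec _ _ h2 h1).
- by right; apply/(hspec _ _ h1 h2).
- by left; apply/(hspec _ _ h2 h1).
- by right; apply/(hspec _ _ h1 h2).
Qed.
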